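(* Let $L\ge1$, $\sigma_1,\dots,\sigma_L\in\mathfrak S_{2k}$, $\varepsilon_1,\dots,\varepsilon_L\in\{1,*\}$, let $T=T^{\varepsilon_1,\dots,\varepsilon_L}_{\sigma_1,\dots,\sigma_L}$ be the strip hypergraph and let $\pi$ be any partition of its vertex set $V$. Then $q(\pi,0)\le0$ and the sequence $(q(\pi,\ell))_{\ell=0,\dots,L}$ is non-increasing. In particular $-k-k|\bar E^\pi|+|V^\pi|=q(\pi,L)\le0$, where $(V^\pi,\bar E^\pi)$ is the skeleton of $T^\pi$.
   Context: Fix $k\ge1$; $\mathfrak S_{2k}$ is the symmetric group on $\{1,\dots,2k\}$. A $*$-test hypergraph $(V,E,\sigma,\varepsilon)$ consists of a finite vertex set $V$, a finite multiset $E$ of hyperedges $e=(v_1,\dots,v_{2k})\in V^{2k}$ (the first $k$ entries are the inputs, the last $k$ the outputs), and labels $\sigma(e)\in\mathfrak S_{2k}$, $\varepsilon(e)\in\{1,*\}$. Strip hypergraph $T=T^{\varepsilon_1,\dots,\varepsilon_L}_{\sigma_1,\dots,\sigma_L}$: $V=\{(i,\ell):i\in[k],\ell\in[L]\}$, hyperedges $e_\ell=((1,\ell+1),\dots,(k,\ell+1),(1,\ell),\dots,(k,\ell))$ for $\ell\in[L]$ (each with multiplicity one), with the convention $(i,L+1)=(i,1)$, labels $\sigma(e_\ell)=\sigma_\ell$, $\varepsilon(e_\ell)=\varepsilon_\ell$. For $0\le\ell\le L-1$, $S_\ell$ is the hypergraph with vertex set $V_\ell=\{(i,j):i\in[k],j\in[\ell+1]\}$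 and hyperedges $e_1,\dots,e_\ell$; $S_L=T$. A partition $\pi$ of $V$ induces (by restriction) a partition of each $V_\ell$ and thus a quotient $S_\ell^\pi$: its vertices are the blocks of the restricted partition, and each hyperedge $(v_1,\dots,v_{2k})$ becomes $(B_1,\dots,B_{2k})$ with $v_s\in B_s$. The skeleton of a quotient with vertex set $V^\pi_\ell$ and hyperedges $E^\pi_\ell$ is the pair $(V^\pi_\ell,\bar E^\pi_\ell)$, where $\bar E^\pi_\ell$ is the set (without multiplicity) of the underlying vertex sets $\{B_1,\dots,B_{2k}\}$ of the hyperedges $(B_1,\dots,B_{2k})\in E^\pi_\ell$. Define $q(\pi,\ell)=-k-k|\bar E^\pi_\ell|+|V^\pi_\ell|$ for $\ell=0,\dots,L$. *)

From HB Require Import structures.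
From mathcomp Require Import all_boot all_order all_algebra all_fingroup.
Set Implicit Arguments. Unset Strict Implicit. Unset Printing Implicit Defensive.
Import GRing.Theory Num.Theory.

(* A *-test hypergraph with vertices in a finite type V: a vertex set and a
   (multi)list of hyperedges; a hyperedge is a map 'I_(k+k) -> V (first k
   entries inputs, last k outputs) with labels sigma in 'S_(k+k) and
   epsilon : bool  (true stands for "*", false for "1"). *)
Record thyp (V : finType) (k : nat) := THyp {
  hverts : {set V};
  hedges : seq ({ffun 'I_(k + k) -> V} * ('S_(k + k) * bool)) }.

Definition restrict (V : finType) (P : {set {set V}}) (A : {set V})
  : {set {set V}} := [set B :&: A | B in P] :\ set0.

Definition skel_verts V k (H : thyp V k) (P : {set {set V}}) :=
  restrict P (hverts H).

Definition skel_edges V k (H : thyp V k) (P : {set {set V}})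
  : {set {set {set V}}} :=
  [set [set pblock (skel_verts H P) (e.1 s) | s : 'I_(k + k)]
     | e : {ffun 'I_(k + k) -> V} * ('S_(k + k) * bool) in hedges H].

Definition qval V k (H : thyp V k) (P : {set {set V}}) : int :=
  (- (k%:Z) - (k * #|skel_edges H P|)%N%:Z + (#|skel_verts H P|)%:Z)%R.

(* Strip hypergraph, 0-indexed: vertex (i,l) : ('I_k * 'I_L)%type stands for (i+1,l+1).
   Hyperedge e_(j+1) (j : 'I_L) is ((i, j+1 mod L))_i followed by ((i, j))_i. *)
Definition strip_edge k L (j : 'I_L) : {ffun 'I_(k + k) -> ('I_k * 'I_L)%type} :=
  [ffun s => match split s with
             | inl i => (i, ordS j)
             | inr i => (i, j)
             end].

(* S_l: vertices (i,j) with j in [l+1] (1-indexed), hyperedges e_1..e_l;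
   for l >= L-1 the vertex set is all of V, and S_L = T. *)
Definition strip_S k L (sigma : 'I_L -> 'S_(k + k)) (eps : 'I_L -> bool)
  (l : nat) : thyp (('I_k * 'I_L)%type) k :=
  THyp [set v : ('I_k * 'I_L)%type | (v.2 : nat) <= l]
       [seq (strip_edge k j, (sigma j, eps j)) | j <- [seq j <- enum 'I_L | (val j < l)%N]].

Definition q k L sigma eps (P : {set {set ('I_k * 'I_L)%type}}) (l : nat) : int :=
  qval (@strip_S k L sigma eps l) P.

From mathcomp Require Import all_boot all_order all_algebra all_fingroup zify.
Import GRing.Theory Num.Theory.
Set Implicit Arguments. Unset Strict Implicit. Unset Printing Implicit Defensive.

(* For a partition P of the vertex type and a hypergraph H whose
   hyperedges only use vertices of H, the quotient H^P can be described with
   the blocks of P itself instead of the blocks of the restricted partition: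
   |V^P| is the number of P-blocks meeting the vertex set, and |bar E^P| is the
   number of distinct sets {pblock P v | v in e} for hyperedges e
   ([qval_blocks]).  In the strip, passing from S_l to S_(l+1) adds the k
   vertices of the next layer (hence at most k new blocks) and one hyperedge
   e_(l+1), which contains that whole layer.  If some new block appears, the
   block set of e_(l+1) contains it and so differs from those of e_1..e_l,
   i.e. |bar E^P| grows by one, compensating the (at most k) new vertices;
   otherwise |V^P| does not grow at all ([strip_step]).  Finally S_0 has a
   single layer and no hyperedge, so q(P,0) <= -k + k = 0 ([q_strip_base]),
   and q(P,L) <= q(P,0) by monotonicity. *)

Lemma imset_in_inj (aT rT : finType) (f : aT -> rT) (D X Y : {set aT}) :
  {in D &, injective f} -> X \subset D -> Y \subset D -> f @: X = f @: Y -> X = Y.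
Proof.
move=> injf sXD sYD fXY.
suff sub (X1 Y1 : {set aT}) : X1 \subset D -> Y1 \subset D ->
    f @: X1 = f @: Y1 -> X1 \subset Y1.
  by apply/eqP; rewrite eqEsubset (sub X Y) // (sub Y X).
move=> sX1 sY1 fXY1; apply/subsetP => x xX1.
have /imsetP[y yY1 fxy] : f x \in f @: Y1 by rewrite -fXY1 imset_f.
by rewrite (injf x y (subsetP sX1 x xX1) (subsetP sY1 y yY1) fxy).
Qed.

Section PartitionBlocks.
Variables (V : finType) (P : {set {set V}}).
Hypothesis partP : partition P [set: V].

Let coverP (x : V) : x \in cover P.
Proof. by case/and3P: partP => /eqP -> _ _; rewrite inE. Qed.

Let trivP : trivIset P.
Proof. by case/and3P: partP. Qed.

Lemma restrictE (A : {set V}) : restrict P A = [set pblock P x :&: A | x in A].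
Proof.
apply/setP=> C; apply/idP/imsetP.
- rewrite !inE => /andP[/set0Pn[x] + /imsetP[B BP CE]].
  rewrite CE inE => /andP[xB xA]; exists x => //.
  by rewrite (def_pblock trivP BP xB).
- case=> x xA ->; rewrite !inE; apply/andP; split.
    by apply/set0Pn; exists x; rewrite inE mem_pblock coverP xA.
  by apply: imset_f; exact: pblock_mem.
Qed.

Lemma trivIset_restrict (A : {set V}) : trivIset (restrict P A).
Proof.
apply/trivIsetP => C1 C2; rewrite restrictE.
case/imsetP=> x1 _ -> /imsetP[x2 _ ->] neC.
have neB : pblock P x1 != pblock P x2 by apply: contraNneq neC => ->.
have := trivIsetP trivP _ _ (pblock_mem (coverP x1)) (pblock_mem (coverP x2)) neB.
move=> disB; apply: (disjointWl (subsetIl _ A)).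
by rewrite disjoint_sym; apply: (disjointWl (subsetIl _ A)); rewrite disjoint_sym.
Qed.

Lemma pblock_restrict (A : {set V}) (x : V) :
  x \in A -> pblock (restrict P A) x = pblock P x :&: A.
Proof.
move=> xA; apply: def_pblock; first exact: trivIset_restrict.
  by rewrite restrictE; apply: imset_f.
by rewrite inE mem_pblock coverP xA.
Qed.

Lemma trace_inj (A : {set V}) :
  {in pblock P @: A &, injective (fun B : {set V} => B :&: A)}.
Proof.
move=> B1 B2 /imsetP[x1 x1A ->] /imsetP[x2 x2A ->] /= traceE.
have : x1 \in pblock P x2 :&: A by rewrite -traceE inE mem_pblock coverP x1A.
by rewrite inE => /andP[/(def_pblock trivP (pblock_mem (coverP x2))) ->].
Qed.

Lemma card_restrict (A : {set V}) : #|restrict P A| = #|pblock P @: A|.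
Proof. by rewrite restrictE -(card_in_imset (@trace_inj A)) -imset_comp. Qed.

Variable k : nat.
Local Notation edge := ({ffun 'I_(k + k) -> V} * ('S_(k + k) * bool))%type.

Definition edge_blocks (H : thyp V k) : {set {set {set V}}} :=
  [set [set pblock P (e.1 s) | s : 'I_(k + k)] | e : edge in hedges H].

Definition edges_in_verts (H : thyp V k) : Prop :=
  forall e : edge, e \in hedges H -> forall s, e.1 s \in hverts H.

Lemma card_skel_edges (H : thyp V k) :
  edges_in_verts H -> #|skel_edges H P| = #|edge_blocks H|.
Proof.
move=> Hin; set A := hverts H.
have -> : skel_edges H P = [set [set B :&: A | B in X] | X : {set {set V}} in edge_blocks H].
  rewrite /skel_edges /edge_blocks -imset_comp; apply: eq_in_imset => e eH /=.
  by rewrite -imset_comp; apply: eq_imset => s /=; rewrite pblock_restrict ?Hin.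
apply: card_in_imset => X Y /imsetP[e1 e1H ->] /imsetP[e2 e2H ->].
by apply: (imset_in_inj (@trace_inj A)); apply/subsetP => _ /imsetP[s _ ->];
  rewrite imset_f ?Hin.
Qed.

Lemma qval_blocks (H : thyp V k) : edges_in_verts H ->
  qval H P = (- k%:Z - (k * #|edge_blocks H|)%N%:Z + #|pblock P @: hverts H|%:Z)%R.
Proof.
by move=> Hin; rewrite /qval card_skel_edges // /skel_verts card_restrict.
Qed.

End PartitionBlocks.

Section Strip.
Variables (k L : nat) (sigma : 'I_L -> 'S_(k + k)) (eps : 'I_L -> bool).
Variable P : {set {set ('I_k * 'I_L)%type}}.
Hypothesis partP : partition P [set: ('I_k * 'I_L)%type].

Local Notation vertex := ('I_k * 'I_L)%type.

Definition layers_upto (l : nat) : {set vertex} := [set v : vertex | (v.2 <= l)%N].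

Definition layer (j : 'I_L) : {set vertex} := [set (i, j) | i : 'I_k].

Definition first_edges (l : nat) : {set 'I_L} := [set j : 'I_L | (j < l)%N].

Definition strip_blocks (j : 'I_L) : {set {set vertex}} :=
  [set pblock P (strip_edge k j s) | s : 'I_(k + k)].

Lemma strip_edge_in (l : nat) (j : 'I_L) (s : 'I_(k + k)) :
  (j < l)%N -> strip_edge k j s \in layers_upto l.
Proof.
move=> jl; rewrite ffunE inE; case: split => i /=; last exact: ltnW.
exact: leq_trans (leq_mod _ _) jl.
Qed.

Lemma layer_sub_strip_edge (j : 'I_L) :
  layer (ordS j) \subset [set strip_edge k j s | s : 'I_(k + k)].
Proof.
apply/subsetP => _ /imsetP[i _ ->]; apply/imsetP; exists (lshift k i) => //.
by rewrite ffunE (unsplitK (inl i)).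
Qed.

Lemma strip_edges_in_verts (l : nat) : edges_in_verts (strip_S sigma eps l).
Proof.
move=> e /mapP[j + ->] s /=; rewrite mem_filter => /andP[jl _].
exact: strip_edge_in.
Qed.

Lemma edge_blocks_strip (l : nat) :
  edge_blocks P (strip_S sigma eps l) = strip_blocks @: first_edges l.
Proof.
apply/setP => Z; apply/imsetP/imsetP.
- case=> e /mapP[j + ->] ->; rewrite mem_filter => /andP[jl _].
  by exists j; rewrite ?inE.
- case=> j; rewrite inE => jl ->; exists (strip_edge k j, (sigma j, eps j)) => //.
  by apply/mapP; exists j; rewrite // mem_filter mem_enum jl.
Qed.

Lemma q_strip (l : nat) : q sigma eps P l =
  (- k%:Z - (k * #|strip_blocks @: first_edges l|)%N%:Z
     + #|pblock P @: layers_upto l|%:Z)%R.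
Proof.
by rewrite /q qval_blocks ?edge_blocks_strip //; exact: strip_edges_in_verts.
Qed.

Lemma card_layer_blocks (j : 'I_L) : (#|pblock P @: layer j| <= k)%N.
Proof.
rewrite -[k in (_ <= k)%N]card_ord.
exact: leq_trans (leq_imset_card _ _) (leq_imset_card _ _).
Qed.

Section Step.
Variables (l : nat) (hl : (l < L)%N).
Let j := Ordinal hl.

Lemma first_edges_succ : first_edges l.+1 = j |: first_edges l.
Proof. by apply/setP => i; rewrite !inE ltnS leq_eqVlt -val_eqE. Qed.

(* Every block met by S_(l+1) is met by S_l or by the layer ordS j, which is
   the layer l+1 when l+1 < L (for l+1 = L there is nothing new). *)
Lemma layers_upto_succ :
  pblock P @: layers_upto l.+1 \subset
  pblock P @: layers_upto l :|: pblock P @: layer (ordS j).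
Proof.
apply/subsetP => B /imsetP[[i j'] + ->]; rewrite !inE /= => j'l.
case: (leqP j' l) => [j'le | j'gt]; first by rewrite imset_f ?inE.
rewrite orbC imset_f //; apply/imsetP; exists i => //; congr (_, _).
have j'E : val j' = l.+1 by apply/eqP; rewrite eqn_leq j'l j'gt.
by apply: val_inj; rewrite /= modn_small -j'E ?ltn_ord.
Qed.

Lemma strip_blocks_new (B : {set vertex}) :
  B \in pblock P @: layer (ordS j) -> B \notin pblock P @: layers_upto l ->
  strip_blocks j \notin strip_blocks @: first_edges l.
Proof.
move=> Bnew Bold; apply/imsetP => -[j']; rewrite inE => j'l eqBlocks.
have : B \in strip_blocks j'.
  rewrite -eqBlocks; case/imsetP: Bnew => v vlayer ->.
  case/imsetP: (subsetP (layer_sub_strip_edge j) v vlayer) => s _ ->.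
  by apply/imsetP; exists s.
by case/imsetP => s _ BE; rewrite BE imset_f ?strip_edge_in in Bold.
Qed.

(* The key inequality: k |bar E(S_l^P)| + |V(S_(l+1)^P)| is bounded by
   k |bar E(S_(l+1)^P)| + |V(S_l^P)|, i.e. q(P,l+1) <= q(P,l). *)
Lemma strip_step :
  (k * #|strip_blocks @: first_edges l| + #|pblock P @: layers_upto l.+1| <=
   k * #|strip_blocks @: first_edges l.+1| + #|pblock P @: layers_upto l|)%N.
Proof.
set Dl := pblock P @: layers_upto l.
set N := pblock P @: layer (ordS j) :\: Dl.
have cardD : (#|pblock P @: layers_upto l.+1| <= #|Dl| + #|N|)%N.
  apply: leq_trans (leq_card_setU Dl N).
  apply/subset_leq_card; apply: subset_trans layers_upto_succ _.
  by rewrite /N setDE setUIr setUCr setIT.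
have cardN : (#|N| <= k)%N.
  exact: leq_trans (subset_leq_card (subsetDl _ _)) (card_layer_blocks _).
rewrite first_edges_succ imsetU1.
have [N0 | [B BN]] := set_0Vmem N.
  rewrite N0 cards0 addn0 in cardD; apply: leq_add cardD.
  by rewrite leq_mul2l subset_leq_card ?subsetUr ?orbT.
move: BN; rewrite inE => /andP[Bold Bnew].
rewrite cardsU1 (strip_blocks_new Bnew Bold) mulnDr muln1.
rewrite [k + _]addnC -addnA leq_add2l (leq_trans cardD) //.
by rewrite addnC leq_add2r.
Qed.

End Step.

(* S_0 consists of the single layer 0 and no hyperedge. *)
Lemma q_strip_base : (0 < L)%N -> (q sigma eps P 0 <= 0)%R.
Proof.
move=> L0; rewrite q_strip.
have -> : first_edges 0 = set0 by apply/setP => i; rewrite !inE.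
have : (#|pblock P @: layers_upto 0| <= k)%N.
  apply: leq_trans (card_layer_blocks (Ordinal L0)); apply/subset_leq_card/imsetS.
  apply/subsetP => -[i j]; rewrite inE leqn0 => /eqP j0; apply/imsetP.
  by exists i => //; congr (_, _); apply: val_inj.
rewrite imset0 cards0 muln0; lia.
Qed.

End Strip.

Unset Implicit Arguments.
Import Order.TTheory.
Local Open Scope ring_scope.

Theorem mainTheorem16 (k L : nat) (hk : (0 < k)%N) (hL : (0 < L)%N)
  (sigma : 'I_L -> 'S_(k + k)) (eps : 'I_L -> bool)
  (P : {set {set ('I_k * 'I_L)%type}}) (hP : partition P [set: ('I_k * 'I_L)%type]) :
  q sigma eps P 0 <= 0 /\
  (forall l : nat, (l < L)%N -> q sigma eps P l.+1 <= q sigma eps P l) /\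
  q sigma eps P L <= 0.
Proof.
have q0 := q_strip_base sigma eps hP hL.
have q_step l : (l < L)%N -> q sigma eps P l.+1 <= q sigma eps P l.
  by move=> hl; rewrite !(q_strip sigma eps hP); have := strip_step P hl; lia.
do 2![split=> //].
suff q_le_q0 l : (l <= L)%N -> q sigma eps P l <= q sigma eps P 0.
  exact: le_trans (q_le_q0 L (leqnn L)) q0.
by elim: l => [//|l IH] hl; apply: le_trans (q_step l hl) (IH (ltnW hl)).
Qed.
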